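(* Let $G$ be a compact Lie group with normalized Haar measure $dg$, and let $k\geq 2$. Let $\sigma_1,\ldots,\sigma_k$ and $\alpha_1,\ldots,\alpha_k$ be finite-dimensional unitary representations of $G$, and for each pair $1\leq i<j\leq k$ let $\rho_{ij}$ be a finite-dimensional unitary representation of $G$. Define the linear operator $$\Phi\colon V_{\sigma_1}\otimes\cdots\otimes V_{\sigma_k}\to V_{\sigma_1}\otimes\cdots\otimes V_{\sigma_k},$$ $$\Phi:=\int_{G^k}\Bigl(\prod_{i=1}^k\chi_{\alpha_i}(g_i)\Bigr)\Bigl(\prod_{1\leq i<j\leq k}\chi_{\rho_{ij}}(g_i g_j^{-1})\Bigr)\,\sigma_1(g_1)\otimes\cdots\otimes\sigma_k(g_k)\,dg_1\cdots dg_k .$$ Then $\Phi$ is a positive operator, i.e. $\langle v,\Phi v\rangle\geq 0$ for all $v\in V_{\sigma_1}\otimes\cdots\otimes V_{\sigma_k}$ (with respect to the tensor product of the $G$-invariant scalar products).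
   Context: For a finite-dimensional representation $\rho\colon G\to\mathrm{Aut}(V_\rho)$, $\chi_\rho(g)=\mathrm{tr}\,\rho(g)$ denotes its character. Each representation space carries a $G$-invariant Hermitian scalar product making the representation unitary. An operator $A$ on a Hilbert space is positive if $\langle v,Av\rangle\geq 0$ for all $v$. (Diagrammatically, $\Phi$ consists of $k$ Haar intertwiners $\int_G\rho_1(g)\otimes\cdots\otimes\rho_r(g)\,dg$, each with one external line $\sigma_i$, one closed loop $\alpha_i$ through it alone, and for each pair $i<j$ one closed loop $\rho_{ij}$ passing through intertwiner $i$ as $\rho_{ij}$ and through intertwiner $j$ as the dual representation.) *)

From HB Require Import structures.
From mathcomp Require Import all_boot all_order all_algebra.
From mathcomp Require Import all_classical all_reals topology normedtype.
Import numFieldNormedType.Exports.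
From mathcomp Require Import complex.

Set Implicit Arguments.
Unset Strict Implicit.
Unset Printing Implicit Defensive.

Import Order.TTheory GRing.Theory Num.Theory.
Local Open Scope ring_scope.
Local Open Scope complex_scope.

Definition is_group (G : Type) (mul : G -> G -> G) (inv : G -> G) (e : G) :=
  [/\ forall x y z, mul x (mul y z) = mul (mul x y) z,
      forall x, mul e x = x,
      forall x, mul x e = x,
      forall x, mul (inv x) x = e &
      forall x, mul x (inv x) = e].

Definition is_compact_group (G : topologicalType) (mul : G -> G -> G)
    (inv : G -> G) (e : G) :=
  [/\ is_group mul inv e,
      continuous (fun p : G * G => mul p.1 p.2),
      continuous inv,
      hausdorff_space G &
      compact [set: G]].

(* The normalized Haar integral on continuous real functions, i.e. the
   positive linear functional f |-> \int_G f dg given by the normalized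
   Haar measure (Riesz representation): linear, positive, normalized,
   left invariant. *)
Definition is_haar_integral (R : realType) (G : topologicalType)
    (mul : G -> G -> G) (I : (G -> R) -> R) :=
  [/\ forall f g : G -> R, continuous f -> continuous g ->
        I (fun x => f x + g x) = I f + I g,
      forall (c : R) (f : G -> R), continuous f -> I (fun x => c * f x) = c * I f,
      forall f : G -> R, continuous f -> (forall x, 0 <= f x) -> 0 <= I f,
      I (fun _ => 1) = 1 &
      forall (f : G -> R) (h : G), continuous f -> I (fun x => f (mul h x)) = I f].

Fixpoint iter_int (R : realType) (G : Type) (e : G) (I : (G -> R) -> R)
    (n : nat) (f : (nat -> G) -> R) : R :=
  match n with
  | 0 => f (fun _ => e)
  | n'.+1 => I (fun x => iter_int e I n'
                  (fun g => f (fun j => if j == n' then x else g j)))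
  end.

Definition iter_intC (R : realType) (G : Type) (e : G) (I : (G -> R) -> R)
    (n : nat) (f : (nat -> G) -> R[i]) : R[i] :=
  (iter_int e I n (fun g => complex.Re (f g)))%:C
  + 'i * (iter_int e I n (fun g => complex.Im (f g)))%:C.

(* Finite-dimensional unitary (continuous) representation, as a matrix-valued
   map in an orthonormal basis for the invariant scalar product. *)
Definition is_unitary_rep (R : realType) (G : topologicalType)
    (mul : G -> G -> G) (e : G) (n : nat) (rho : G -> 'M[R[i]]_n) :=
  [/\ rho e = 1%:M,
      forall g h, rho (mul g h) = rho g *m rho h,
      forall g, rho g *m (map_mx Num.conj (rho g))^T = 1%:M &
      forall i j, continuous (fun g => complex.Re (rho g i j)) /\
                  continuous (fun g => complex.Im (rho g i j))].

Definition character (R : realType) (G : Type) (n : nat)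
    (rho : G -> 'M[R[i]]_n) (g : G) : R[i] := \tr (rho g).

(* Matrix coefficients of the operator Phi in the tensor product basis
   indexed by multi-indices a : forall i, 'I_(ds i). The entry of the
   Kronecker product sigma_1(g_1) (x) ... (x) sigma_k(g_k) at (a, b) is
   \prod_i sigma_i(g_i) (a i) (b i). *)
Definition Phi (R : realType) (G : Type) (mul : G -> G -> G) (inv : G -> G)
    (e : G) (I : (G -> R) -> R) (k : nat)
    (ds da : 'I_k -> nat) (dr : 'I_k -> 'I_k -> nat)
    (sigma : forall i : 'I_k, G -> 'M[R[i]]_(ds i))
    (alpha : forall i : 'I_k, G -> 'M[R[i]]_(da i))
    (rho : forall i j : 'I_k, G -> 'M[R[i]]_(dr i j))
    (a b : {dffun forall i : 'I_k, 'I_(ds i)}) : R[i] :=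
  iter_intC e I k (fun g =>
    (\prod_(i < k) character (alpha i) (g i))
    * (\prod_(i < k) \prod_(j < k | (i < j)%N)
         character (rho i j) (mul (g i) (inv (g j))))
    * \prod_(i < k) sigma i (g i) (a i) (b i)).

From HB Require Import structures.
From mathcomp Require Import all_boot all_order all_algebra.
From mathcomp Require Import all_classical all_reals topology normedtype.
Import numFieldNormedType.Exports.
From mathcomp Require Import complex.
Import Order.TTheory GRing.Theory Num.Theory.
Local Open Scope ring_scope.
Local Open Scope complex_scope.
Set Implicit Arguments.
Unset Strict Implicit.
Unset Printing Implicit Defensive.

(* Expanding each character into matrix coefficients,
     chi_alpha(g) = sum_s alpha(g)_ss  and
     chi_rho(g h^-1) = sum_(p,q) rho(g)_pq conj(rho(h)_pq),
   the integrand becomes a sum of products of functions of a single g_i, each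
   a matrix coefficient of the unitary representation
     pi_i = sigma_i (x) alpha_i (x) (x)_(j>i) rho_ij (x) (x)_(j<i) conj(rho_ji).
   The integral over G^k therefore factorizes into the averages
   P_i = \int pi_i(g) dg, and each P_i is an orthogonal projection, i.e.
   P_i = P_i^* P_i.  Substituting this identity shows that the matrix of Phi
   has the form Phi_ab = sum_p conj(Y_ap) Y_bp, a Gram matrix. *)

Section ComplexContinuity.
Variables (R : realType) (T : topologicalType).
Local Notation C := R[i].
Implicit Types f g : T -> C.

Definition continuousC f :=
  continuous (fun x => complex.Re (f x)) /\ continuous (fun x => complex.Im (f x)).

Lemma continuousC_cst (c : C) : continuousC (fun _ => c).
Proof. by split; apply: cst_continuous. Qed.

Lemma continuousCD f g : continuousC f -> continuousC g -> continuousC (fun x => f x + g x).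
Proof.
move=> [f1 f2] [g1 g2]; split=> x.
- have -> : (fun y => complex.Re (f y + g y)) = fun y => complex.Re (f y) + complex.Re (g y).
    by apply: funext => y; case: (f y); case: (g y).
  exact: cvgD (f1 x) (g1 x).
- have -> : (fun y => complex.Im (f y + g y)) = fun y => complex.Im (f y) + complex.Im (g y).
    by apply: funext => y; case: (f y); case: (g y).
  exact: cvgD (f2 x) (g2 x).
Qed.

Lemma continuousCM f g : continuousC f -> continuousC g -> continuousC (fun x => f x * g x).
Proof.
move=> [f1 f2] [g1 g2]; split=> x.
- have -> : (fun y => complex.Re (f y * g y)) =
            fun y => complex.Re (f y) * complex.Re (g y) - complex.Im (f y) * complex.Im (g y).
    by apply: funext => y; case: (f y); case: (g y).
  exact: cvgB (cvgM (f1 x) (g1 x)) (cvgM (f2 x) (g2 x)).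
- have -> : (fun y => complex.Im (f y * g y)) =
            fun y => complex.Re (f y) * complex.Im (g y) + complex.Im (f y) * complex.Re (g y).
    by apply: funext => y; case: (f y); case: (g y).
  exact: cvgD (cvgM (f1 x) (g2 x)) (cvgM (f2 x) (g1 x)).
Qed.

Lemma continuousCJ f : continuousC f -> continuousC (fun x => (f x)^*).
Proof.
move=> [f1 f2]; split=> x.
- have -> : (fun y => complex.Re (f y)^*) = fun y => complex.Re (f y).
    by apply: funext => y; case: (f y).
  exact: f1.
- have -> : (fun y => complex.Im (f y)^*) = fun y => - complex.Im (f y).
    by apply: funext => y; case: (f y).
  exact: cvgN (f2 x).
Qed.

Lemma continuousC_comp (h : T -> T) f : continuous h -> continuousC f ->
  continuousC (fun x => f (h x)).
Proof.
move=> ch [f1 f2].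
by split=> x; [exact: continuous_comp (ch x) (f1 (h x)) | exact: continuous_comp (ch x) (f2 (h x))].
Qed.

Lemma continuousC_sum (I : Type) (r : seq I) (P : pred I) (F : I -> T -> C) :
  (forall i, continuousC (F i)) -> continuousC (fun x => \sum_(i <- r | P i) F i x).
Proof.
move=> cF; elim: r => [|i r IH].
  by under eq_fun do rewrite big_nil; apply: continuousC_cst.
under eq_fun do rewrite big_cons.
by case: (P i) => //; apply: continuousCD.
Qed.

Lemma continuousC_prod (I : Type) (r : seq I) (P : pred I) (F : I -> T -> C) :
  (forall i, continuousC (F i)) -> continuousC (fun x => \prod_(i <- r | P i) F i x).
Proof.
move=> cF; elim: r => [|i r IH].
  by under eq_fun do rewrite big_nil; apply: continuousC_cst.
under eq_fun do rewrite big_cons.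
by case: (P i) => //; apply: continuousCM.
Qed.

End ComplexContinuity.

Section ComplexHaar.
Variables (R : realType) (G : topologicalType) (mul : G -> G -> G) (I : (G -> R) -> R).
Hypothesis HI : is_haar_integral mul I.
Local Notation C := R[i].
Implicit Types f g : G -> C.

Definition haarC f : C :=
  (I (fun x => complex.Re (f x)))%:C + 'i * (I (fun x => complex.Im (f x)))%:C.

Lemma haarCE f : haarC f = I (fun x => complex.Re (f x)) +i* I (fun x => complex.Im (f x)).
Proof. by rewrite /haarC; simpc. Qed.

Lemma eq_haar (u w : G -> R) : u =1 w -> I u = I w.
Proof. by move=> /funext ->. Qed.

Lemma haar_cst (c : R) : I (fun _ => c) = c.
Proof.
have [_ IZ _ I1 _] := HI.
rewrite -[RHS]mulr1 -I1 -IZ; last exact: cst_continuous.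
by apply: eq_haar => x; rewrite mulr1.
Qed.

Lemma haarC_cst (c : C) : haarC (fun _ => c) = c.
Proof. by rewrite haarCE !haar_cst; case: c. Qed.

Lemma haarCD f g : continuousC f -> continuousC g ->
  haarC (fun x => f x + g x) = haarC f + haarC g.
Proof.
move=> [f1 f2] [g1 g2]; have [ID _ _ _ _] := HI.
rewrite !haarCE; simpc; rewrite -!ID //.
by rewrite !(eq_haar (fun x => raddfD _ (f x) (g x))).
Qed.

Lemma haar_lincomb (a b : R) (u w : G -> R) : continuous u -> continuous w ->
  I (fun x => a * u x + b * w x) = a * I u + b * I w.
Proof.
move=> cu cw; have [ID IZ _ _ _] := HI.
by rewrite ID ?IZ // => x; [exact: cvgM (cvg_cst a) (cu x) | exact: cvgM (cvg_cst b) (cw x)].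
Qed.

Lemma haarCZ (c : C) f : continuousC f -> haarC (fun x => c * f x) = c * haarC f.
Proof.
move=> [f1 f2]; rewrite !haarCE; case: c => a b.
rewrite (eq_haar (w := fun x => a * complex.Re (f x) + - b * complex.Im (f x))); last first.
  by move=> x; case: (f x) => ? ? /=; rewrite mulNr.
rewrite (eq_haar (u := fun x => complex.Im _)
                 (w := fun x => a * complex.Im (f x) + b * complex.Re (f x))); last first.
  by move=> x; case: (f x).
by rewrite !haar_lincomb //; simpc.
Qed.

Lemma haarCJ f : continuousC f -> haarC (fun x => (f x)^*) = (haarC f)^*.
Proof.
move=> [_ f2]; have [_ IZ _ _ _] := HI; rewrite !haarCE /=.
rewrite (eq_haar (u := fun x => complex.Re _) (w := fun x => complex.Re (f x))); last first.
  by move=> x; case: (f x).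
rewrite (eq_haar (u := fun x => complex.Im _) (w := fun x => -1 * complex.Im (f x))); last first.
  by move=> x; case: (f x) => ? ? /=; rewrite mulN1r.
by rewrite IZ // mulN1r.
Qed.

Lemma haarC_translate f h : continuousC f -> haarC (fun x => f (mul h x)) = haarC f.
Proof.
move=> [f1 f2]; have [_ _ _ _ IL] := HI.
by rewrite !haarCE (IL (fun y => complex.Re (f y))) // (IL (fun y => complex.Im (f y))).
Qed.

Lemma haarC_sum (T : Type) (r : seq T) (P : pred T) (c : T -> C) (F : T -> G -> C) :
  (forall t, continuousC (F t)) ->
  haarC (fun x => \sum_(t <- r | P t) c t * F t x) = \sum_(t <- r | P t) c t * haarC (F t).
Proof.
move=> cF; elim: r => [|t r IH].
  by under eq_fun do rewrite big_nil; rewrite big_nil haarC_cst.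
have cT s : continuousC (fun x => c s * F s x) by apply: (continuousCM (f := fun _ => c s)); [apply: continuousC_cst|].
under eq_fun do rewrite big_cons; rewrite big_cons; case: (P t) => //.
by rewrite haarCD ?haarCZ ?IH //; apply: continuousC_sum.
Qed.

End ComplexHaar.

Section IteratedIntegral.
Variables (R : realType) (G : topologicalType) (mul : G -> G -> G) (e : G).
Variable I : (G -> R) -> R.
Hypothesis HI : is_haar_integral mul I.
Local Notation C := R[i].

Lemma iter_intCS n (F : (nat -> G) -> C) :
  iter_intC e I n.+1 F =
  haarC I (fun x => iter_intC e I n (fun g => F (fun j => if j == n then x else g j))).
Proof.
by rewrite /iter_intC /= /haarC; congr (_%:C + _ * _%:C); apply: eq_haar => x; simpc.
Qed.

Lemma iter_intC_sum_prod n (T : finType) (c : T -> C) (F : T -> nat -> G -> C) :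
  (forall t i, continuousC (F t i)) ->
  iter_intC e I n (fun g => \sum_t c t * \prod_(i < n) F t i (g i)) =
  \sum_t c t * \prod_(i < n) haarC I (F t i).
Proof.
elim: n c => [|n IH] c cF.
  by rewrite /iter_intC /= -complexE; apply: eq_bigr => t _; rewrite !big_ord0.
rewrite iter_intCS.
transitivity (haarC I (fun x => \sum_t (c t * \prod_(i < n) haarC I (F t i)) * F t n x)).
  congr (haarC I); apply: funext => x.
  under [RHS]eq_bigr do rewrite mulrAC; rewrite -IH //.
  congr (iter_intC e I n); apply: funext => g; apply: eq_bigr => t _.
  rewrite big_ord_recr /= eqxx mulrAC -mulrA; congr (_ * (_ * _)).
  by apply: eq_bigr => i _; rewrite ifN // neq_ltn ltn_ord.
by rewrite (haarC_sum HI) //; apply: eq_bigr => t _; rewrite big_ord_recr /= mulrA.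
Qed.

End IteratedIntegral.

Section Padding.
Variable R : realType.
Local Notation C := R[i].

(* Square matrices of any size n <= N are read as N x N arrays padded with
   zeros, so that all the tensor factors below can share one index type. *)
Definition padmx n (A : 'M[C]_n) (p q : nat) : C :=
  if insub p is Some p' then (if insub q is Some q' then A p' q' else 0) else 0.

Lemma padmx_ord n (A : 'M[C]_n) (p q : 'I_n) : padmx A p q = A p q.
Proof. by rewrite /padmx !valK. Qed.

Lemma padmx_outr n (A : 'M[C]_n) p q : (n <= q)%N -> padmx A p q = 0.
Proof. by move=> hq; rewrite /padmx; case: insub => // p'; rewrite insubN // -leqNgt. Qed.

Lemma big_ord_pad N n (F : nat -> C) : (n <= N)%N -> (forall r, (n <= r)%N -> F r = 0) ->
  \sum_(r < N) F r = \sum_(r < n) F r.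
Proof.
move=> hn hF; rewrite (big_ord_widen N F hn) (bigID (fun r : 'I_N => (r < n)%N)) /=.
by rewrite [X in _ + X]big1 ?addr0 // => r; rewrite -leqNgt; apply: hF.
Qed.

Lemma padmx_mul N n (A B : 'M[C]_n) p q : (n <= N)%N ->
  padmx (A *m B) p q = \sum_(r < N) padmx A p r * padmx B r q.
Proof.
move=> hn; rewrite (big_ord_pad (F := fun r => padmx A p r * padmx B r q) hn); last first.
  by move=> r hr; rewrite padmx_outr // mul0r.
rewrite /padmx; case: insubP => [p' _ _|_]; last by rewrite big1 // => r _; rewrite mul0r.
case: insubP => [q' _ _|_]; last by rewrite big1 // => r _; rewrite valK mulr0.
by rewrite mxE; apply: eq_bigr => r _; rewrite !valK.
Qed.

Lemma padmx_trace N n (A : 'M[C]_n) : (n <= N)%N -> \tr A = \sum_(r < N) padmx A r r.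
Proof.
move=> hn; rewrite (big_ord_pad (F := fun r => padmx A r r) hn); last first.
  by move=> r hr; rewrite padmx_outr.
by apply: eq_bigr => r _; rewrite padmx_ord.
Qed.

Lemma padmx_adj n (A : 'M[C]_n) p q : padmx (map_mx Num.conj A)^T p q = (padmx A q p)^*.
Proof.
by rewrite /padmx; case: insubP => [p' _ _|_]; case: insubP => [q' _ _|_] //=;
  rewrite ?mxE // oppr0.
Qed.

End Padding.

Section UnitaryCoefficients.
Variables (R : realType) (G : topologicalType) (mul : G -> G -> G) (inv : G -> G).
Local Notation C := R[i].

Definition unitary_coef_rep (X : finType) (pi : G -> X -> X -> C) :=
  [/\ forall g h A B, pi (mul g h) A B = \sum_D pi g A D * pi h D B,
      forall h A B, (pi h B A)^* = pi (inv h) A B &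
      forall A B, continuousC (fun g => pi g A B)].

Definition trivial_coef n (p q : 'I_n.+1) : C := ((p == ord0) && (q == ord0))%:R.

Lemma sum_trivial_coef n : \sum_(p : 'I_n.+1) \sum_(q : 'I_n.+1) trivial_coef p q = 1.
Proof.
rewrite (bigD1 ord0) //= [X in _ + X]big1 => [|p /negbTE p0]; last first.
  by rewrite big1 // => q _; rewrite /trivial_coef p0.
rewrite addr0 (bigD1 ord0) //= [X in _ + X]big1 => [|q /negbTE q0]; last first.
  by rewrite /trivial_coef q0 andbF.
by rewrite /trivial_coef eqxx addr0.
Qed.

Lemma unitary_coef_rep_trivial n : unitary_coef_rep (fun (_ : G) => @trivial_coef n).
Proof.
split=> [_ _ A B | _ A B | A B]; last exact: continuousC_cst.
- rewrite big_ord_recl big1 => [|D _]; last by rewrite /trivial_coef andbF mul0r.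
  by rewrite addr0 /trivial_coef eqxx andbT -natrM mulnb.
- by rewrite conjc_nat andbC.
Qed.

Lemma unitary_coef_rep_conj (X : finType) (pi : G -> X -> X -> C) :
  unitary_coef_rep pi -> unitary_coef_rep (fun g A B => (pi g A B)^*).
Proof.
case=> piM piV piC; split=> [g h A B | h A B | A B]; last exact: continuousCJ.
- by rewrite piM rmorph_sum; apply: eq_bigr => D _; rewrite rmorphM.
- by rewrite piV.
Qed.

Lemma unitary_coef_rep_tensor (X Y : finType) (pi1 : G -> X -> X -> C) (pi2 : G -> Y -> Y -> C) :
  unitary_coef_rep pi1 -> unitary_coef_rep pi2 ->
  unitary_coef_rep (fun g (A B : X * Y) => pi1 g A.1 B.1 * pi2 g A.2 B.2).
Proof.
case=> pi1M pi1V pi1C [pi2M pi2V pi2C]; split=> [g h A B | h A B | A B].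
- rewrite pi1M pi2M big_distrlr pair_big /=.
  by apply: eq_bigr => D _; rewrite mulrACA.
- by rewrite rmorphM /= pi1V pi2V.
- exact: continuousCM.
Qed.

Lemma unitary_coef_rep_tensor_ffun (J Y : finType) (pi : J -> G -> Y -> Y -> C) :
  (forall j, unitary_coef_rep (pi j)) ->
  unitary_coef_rep (fun g (A B : {ffun J -> Y}) => \prod_j pi j g (A j) (B j)).
Proof.
move=> hpi; split=> [g h A B | h A B | A B].
- rewrite (eq_bigr (fun j => \sum_D pi j g (A j) D * pi j h D (B j))); last first.
    by move=> j _; case: (hpi j) => ->.
  by rewrite bigA_distr_bigA; apply: eq_bigr => D _; rewrite -big_split.
- by rewrite rmorph_prod; apply: eq_bigr => j _ /=; case: (hpi j) => _ piV _; rewrite piV.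
- by apply: continuousC_prod => j; case: (hpi j).
Qed.

Section Group.
Variable e : G.
Hypothesis HG : is_compact_group mul inv e.

Lemma unitary_rep_inv n (rho : G -> 'M[C]_n) : is_unitary_rep mul e rho ->
  forall h, rho (inv h) = (map_mx Num.conj (rho h))^T.
Proof.
have [[_ mul1g _ mulVg _] _ _ _ _] := HG.
case=> rho1 rhoM rhoU _ h.
by rewrite -[LHS]mulmx1 -(rhoU h) mulmxA -rhoM mulVg rho1 mul1mx.
Qed.

Lemma unitary_coef_rep_pad N n (rho : G -> 'M[C]_n) : is_unitary_rep mul e rho -> (n <= N)%N ->
  unitary_coef_rep (fun g (p q : 'I_N) => padmx (rho g) p q).
Proof.
move=> hrho hn; have [_ rhoM _ rhoC] := hrho.
split=> [g h A B | h A B | A B].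
- by rewrite rhoM (padmx_mul _ _ _ _ hn).
- by rewrite (unitary_rep_inv hrho) padmx_adj.
- rewrite /padmx; case: insub => [p'|]; last exact: continuousC_cst.
  by case: insub => [q'|]; [exact: rhoC | exact: continuousC_cst].
Qed.

Variable I : (G -> R) -> R.
Hypothesis HI : is_haar_integral mul I.

(* Average pi(h^-1) pi(g) over g and h: invariance in g turns it into
   P = \int pi, and unitarity turns pi(h^-1) into pi(h)^*, giving P = P^* P. *)
Lemma haarC_unitary_coef_rep (X : finType) (pi : G -> X -> X -> C) : unitary_coef_rep pi ->
  forall A B, haarC I (fun g => pi g A B) =
              \sum_D conjc (haarC I (fun g => pi g D A)) * haarC I (fun g => pi g D B).
Proof.
have [_ _ inv_cont _ _] := HG.
case=> piM piV piC A B.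
transitivity (haarC I (fun h => \sum_D haarC I (fun g => pi g D B) * pi (inv h) A D)); last first.
  rewrite (haarC_sum HI); last by move=> D; exact: (continuousC_comp (f := fun y => pi y A D) inv_cont).
  apply: eq_bigr => D _; rewrite mulrC; congr (_ * _).
  have -> : (fun h => pi (inv h) A D) = fun h => (pi h D A)^* by apply: funext => h; rewrite piV.
  exact (haarCJ HI (piC D A)).
rewrite -[LHS](haarC_cst HI); congr (haarC I); apply: funext => h.
rewrite -(haarC_translate HI (inv h) (piC A B)).
under eq_fun do rewrite piM; rewrite (haarC_sum HI) //.
by apply: eq_bigr => D _; rewrite mulrC.
Qed.

End Group.
End UnitaryCoefficients.
Arguments trivial_coef {R n}.

Section GramForms.
Variable R : realType.
Local Notation C := R[i].

Lemma sum_triple (S U V : finType) (F : S -> U -> V -> C) :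
  \sum_(t : S * (U * V)) F t.1 t.2.1 t.2.2 = \sum_s \sum_u \sum_w F s u w.
Proof.
rewrite -(pair_bigA _ (fun s (uw : U * V) => F s uw.1 uw.2)).
by apply: eq_bigr => s _; rewrite pair_bigA.
Qed.

Lemma prod_gram (J X : finType) (P : J -> X -> X -> C) :
  (forall j A B, P j A B = \sum_D conjc (P j D A) * P j D B) ->
  forall fa fb : J -> X, \prod_j P j (fa j) (fb j) =
    \sum_(Df : {ffun J -> X}) conjc (\prod_j P j (Df j) (fa j)) * \prod_j P j (Df j) (fb j).
Proof.
move=> hP fa fb; under eq_bigr do rewrite hP.
by rewrite bigA_distr_bigA; apply: eq_bigr => Df _; rewrite big_split /= rmorph_prod.
Qed.

Lemma gram_form_ge0 (A P : finType) (Y : A -> P -> C) (v : A -> C) :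
  0 <= \sum_a \sum_b (v a)^* * (\sum_p conjc (Y a p) * Y b p) * v b.
Proof.
pose Z p := \sum_a v a * Y a p.
suff -> : \sum_a \sum_b (v a)^* * (\sum_p conjc (Y a p) * Y b p) * v b =
          \sum_p conjc (Z p) * Z p.
  by apply: sumr_ge0 => p _; rewrite mulrC mulcJ_ge0.
transitivity (\sum_a \sum_b \sum_p conjc (v a * Y a p) * (v b * Y b p)).
  apply: eq_bigr => a _; apply: eq_bigr => b _.
  rewrite big_distrr big_distrl /=; apply: eq_bigr => p _.
  by rewrite rmorphM /= -!mulrA; congr (_ * (_ * _)); rewrite mulrC.
under eq_bigr do rewrite exchange_big; rewrite exchange_big.
by apply: eq_bigr => p _; rewrite /Z rmorph_sum big_distrlr.
Qed.

End GramForms.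

Section PhiGram.
Variables (R : realType) (G : topologicalType).
Variables (mul : G -> G -> G) (inv : G -> G) (e : G) (I : (G -> R) -> R).
Hypothesis HG : is_compact_group mul inv e.
Hypothesis HI : is_haar_integral mul I.
Variables (k : nat) (ds da : 'I_k -> nat) (dr : 'I_k -> 'I_k -> nat).
Variables (sigma : forall i : 'I_k, G -> 'M[R[i]]_(ds i))
  (alpha : forall i : 'I_k, G -> 'M[R[i]]_(da i))
  (rho : forall i j : 'I_k, G -> 'M[R[i]]_(dr i j)).
Hypotheses (Hsigma : forall i, is_unitary_rep mul e (sigma i))
  (Halpha : forall i, is_unitary_rep mul e (alpha i))
  (Hrho : forall i j : 'I_k, (i < j)%N -> is_unitary_rep mul e (rho i j)).
Variable M : nat.
Hypotheses (hds : forall i, (ds i <= M)%N) (hda : forall i, (da i <= M)%N)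
  (hdr : forall i j, (dr i j <= M)%N).
Local Notation C := R[i].
Local Notation N := M.+1.
Local Notation multi_index := {dffun forall i : 'I_k, 'I_(ds i)}.

Definition rho_coef (i j : 'I_k) g (p q : 'I_N) : C :=
  if (i < j)%N then padmx (rho i j g) p q else trivial_coef p q.

Definition rho_dual_coef (i j : 'I_k) g (p q : 'I_N) : C :=
  if (j < i)%N then (padmx (rho j i g) p q)^* else trivial_coef p q.

Definition pi_index := (('I_N * 'I_N) * ({ffun 'I_k -> 'I_N} * {ffun 'I_k -> 'I_N}))%type.

(* Matrix coefficients of pi_i = sigma_i (x) alpha_i (x) (x)_(j>i) rho_ij
   (x) (x)_(j<i) conj(rho_ji); the trivial representation fills the slots
   j <= i, resp. j >= i, of the last two tensor powers. *)
Definition pi_coef (i : 'I_k) g (A B : pi_index) : C :=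
  padmx (sigma i g) A.1.1 B.1.1 * padmx (alpha i g) A.1.2 B.1.2 *
  (\prod_j rho_coef i j g (A.2.1 j) (B.2.1 j) * \prod_j rho_dual_coef i j g (A.2.2 j) (B.2.2 j)).

Lemma unitary_coef_rep_pi i : unitary_coef_rep mul inv (pi_coef i).
Proof.
have pad n (rep : G -> 'M[C]_n) : is_unitary_rep mul e rep -> (n <= M)%N ->
    unitary_coef_rep mul inv (fun g (p q : 'I_N) => padmx (rep g) p q).
  by move=> hrep hn; apply: (unitary_coef_rep_pad HG hrep); exact: leqW.
have rho_rep j : unitary_coef_rep mul inv (rho_coef i j).
  rewrite /rho_coef; case: ltnP => [ij|_]; first exact: pad (Hrho ij) (hdr i j).
  exact: unitary_coef_rep_trivial.
have rho_dual_rep j : unitary_coef_rep mul inv (rho_dual_coef i j).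
  rewrite /rho_dual_coef; case: ltnP => [ji|_].
    exact/unitary_coef_rep_conj/(pad _ _ (Hrho ji) (hdr j i)).
  exact: unitary_coef_rep_trivial.
exact: unitary_coef_rep_tensor
  (unitary_coef_rep_tensor (pad _ _ (Hsigma i) (hds i)) (pad _ _ (Halpha i) (hda i)))
  (unitary_coef_rep_tensor (unitary_coef_rep_tensor_ffun rho_rep)
                           (unitary_coef_rep_tensor_ffun rho_dual_rep)).
Qed.

Local Notation diag_index := {ffun 'I_k -> 'I_N}.
Local Notation pair_index := {ffun 'I_k * 'I_k -> 'I_N}.

(* s i is the summation index of the trace chi_alpha_i; U (i, j) for i < j is
   the row (a-side) or column (b-side) index in the expansion
   chi_rho_ij(g_i g_j^-1) = sum_(p,q) rho_ij(g_i)_pq conj(rho_ij(g_j)_pq),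
   shared by the i-th and the j-th tensor factor. *)
Definition pi_idx (a : multi_index) (s : diag_index) (U : pair_index) (i : 'I_k) : pi_index :=
  ((inord (a i), s i),
   ([ffun j => U (i, j)], [ffun j : 'I_k => if (j < i)%N then U (j, i) else ord0])).

Definition rho_factor (i : 'I_k) g (U1 U2 : pair_index) : C :=
  \prod_j rho_coef i j g (U1 (i, j)) (U2 (i, j)) *
  \prod_j rho_dual_coef i j g (if (j < i)%N then U1 (j, i) else ord0)
                              (if (j < i)%N then U2 (j, i) else ord0).

Lemma pi_coef_idx i g a b s U1 U2 :
  pi_coef i g (pi_idx a s U1 i) (pi_idx b s U2 i) =
  sigma i g (a i) (b i) * padmx (alpha i g) (s i) (s i) * rho_factor i g U1 U2.
Proof.
have inord_ds (c : 'I_(ds i)) : @inord M c = c :> nat.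
  by apply: inordK; rewrite ltnS (leq_trans (ltnW (ltn_ord c)) (hds i)).
rewrite /pi_coef /pi_idx /= -[sigma i g (a i) (b i)]padmx_ord !inord_ds.
by congr (_ * (_ * _)); apply: eq_bigr => j _; rewrite !ffunE.
Qed.

Lemma prod_char_alpha (g : nat -> G) :
  \prod_(i < k) character (alpha i) (g i) =
  \sum_(s : diag_index) \prod_i padmx (alpha i (g i)) (s i) (s i).
Proof.
rewrite -(bigA_distr_bigA (fun i (p : 'I_N) => padmx (alpha i (g i)) p p)).
by apply: eq_bigr => i _; apply: padmx_trace; apply: leqW.
Qed.

Lemma character_rho_mul_inv (i j : 'I_k) x y : (i < j)%N ->
  character (rho i j) (mul x (inv y)) =
  \sum_(p : 'I_N) \sum_(q : 'I_N) padmx (rho i j x) p q * conjc (padmx (rho i j y) p q).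
Proof.
move=> ij; have hrho := Hrho ij; have [_ rhoM _ _] := hrho.
rewrite /character rhoM (padmx_trace _ (leqW (hdr i j))); apply: eq_bigr => p _.
rewrite (padmx_mul _ _ _ _ (leqW (hdr i j))); apply: eq_bigr => q _.
by rewrite (unitary_rep_inv HG hrho) padmx_adj.
Qed.

Lemma prod_char_rho (g : nat -> G) :
  \prod_(i < k) \prod_(j < k | (i < j)%N) character (rho i j) (mul (g i) (inv (g j))) =
  \sum_(U1 : pair_index) \sum_(U2 : pair_index) \prod_i rho_factor i (g i) U1 U2.
Proof.
pose char_coef (ij : 'I_k * 'I_k) (p q : 'I_N) : C :=
  if (ij.1 < ij.2)%N then padmx (rho ij.1 ij.2 (g ij.1)) p q * conjc (padmx (rho ij.1 ij.2 (g ij.2)) p q)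
  else trivial_coef p q.
have -> : \prod_(i < k) \prod_(j < k | (i < j)%N) character (rho i j) (mul (g i) (inv (g j))) =
          \prod_(ij : 'I_k * 'I_k) \sum_p \sum_q char_coef ij p q.
  under eq_bigr do rewrite big_mkcond /=.
  rewrite pair_bigA; apply: eq_bigr => -[i j] _ /=.
  rewrite /char_coef /=; case: ltnP => [ij|_]; first exact: character_rho_mul_inv.
  by rewrite sum_trivial_coef.
rewrite bigA_distr_bigA; apply: eq_bigr => U1 _; rewrite bigA_distr_bigA; apply: eq_bigr => U2 _.
rewrite /rho_factor big_split /=.
have -> : \prod_ij char_coef ij (U1 ij) (U2 ij) =
    \prod_(ij : 'I_k * 'I_k)
      (rho_coef ij.1 ij.2 (g ij.1) (U1 (ij.1, ij.2)) (U2 (ij.1, ij.2)) *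
       if (ij.1 < ij.2)%N
       then conjc (padmx (rho ij.1 ij.2 (g ij.2)) (U1 (ij.1, ij.2)) (U2 (ij.1, ij.2)))
       else 1).
  by apply: eq_bigr => -[i j] _; rewrite /char_coef /rho_coef /=; case: ltnP; rewrite ?mulr1.
rewrite big_split -(pair_bigA _ (fun i j => rho_coef i j (g i) (U1 (i, j)) (U2 (i, j)))).
rewrite -(pair_bigA _ (fun i j : 'I_k =>
  if (i < j)%N then conjc (padmx (rho i j (g j)) (U1 (i, j)) (U2 (i, j))) else 1)).
congr (_ * _); rewrite exchange_big /=.
apply: eq_bigr => i _; apply: eq_bigr => j _.
by rewrite /rho_dual_coef; case: ltnP => // _; rewrite /trivial_coef eqxx.
Qed.

Lemma integrand_expand (a b : multi_index) (g : nat -> G) :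
  (\prod_(i < k) character (alpha i) (g i))
  * (\prod_(i < k) \prod_(j < k | (i < j)%N) character (rho i j) (mul (g i) (inv (g j))))
  * \prod_(i < k) sigma i (g i) (a i) (b i)
  = \sum_(t : diag_index * (pair_index * pair_index))
      \prod_i pi_coef i (g i) (pi_idx a t.1 t.2.1 i) (pi_idx b t.1 t.2.2 i).
Proof.
rewrite prod_char_alpha prod_char_rho mulrAC !big_distrl.
rewrite (sum_triple (fun s U1 U2 => \prod_i pi_coef i (g i) (pi_idx a s U1 i) (pi_idx b s U2 i))).
apply: eq_bigr => s _; rewrite big_distrr; apply: eq_bigr => U1 _.
rewrite big_distrr; apply: eq_bigr => U2 _.
by under [RHS]eq_bigr do rewrite pi_coef_idx; rewrite !big_split /= [X in X * _]mulrC.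
Qed.

Lemma Phi_expand (a b : multi_index) :
  Phi mul inv e I sigma alpha rho a b =
  \sum_(t : diag_index * (pair_index * pair_index))
    \prod_i haarC I (fun x => pi_coef i x (pi_idx a t.1 t.2.1 i) (pi_idx b t.1 t.2.2 i)).
Proof.
pose F t (j : nat) : G -> C := if insub j is Some i
  then fun x => pi_coef i x (pi_idx a t.1 t.2.1 i) (pi_idx b t.1 t.2.2 i) else fun=> 1.
have F_ord t (i : 'I_k) : F t i = fun x => pi_coef i x (pi_idx a t.1 t.2.1 i) (pi_idx b t.1 t.2.2 i).
  by rewrite /F valK.
transitivity (iter_intC e I k (fun g => \sum_t 1 * \prod_(i < k) F t i (g i))).
  congr (iter_intC e I k); apply: funext => g; rewrite integrand_expand.
  by apply: eq_bigr => t _; rewrite mul1r; apply: eq_bigr => i _; rewrite F_ord.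
rewrite (iter_intC_sum_prod e HI); last first.
  move=> t j; rewrite /F; case: insub => [i|]; last exact: continuousC_cst.
  by case: (unitary_coef_rep_pi i).
by apply: eq_bigr => t _; rewrite mul1r; apply: eq_bigr => i _; rewrite F_ord.
Qed.

Definition gram_vec (a : multi_index) (p : diag_index * {ffun 'I_k -> pi_index}) : C :=
  \sum_(U : pair_index) \prod_i haarC I (fun x => pi_coef i x (p.2 i) (pi_idx a p.1 U i)).

Lemma Phi_gram (a b : multi_index) :
  Phi mul inv e I sigma alpha rho a b = \sum_p conjc (gram_vec a p) * gram_vec b p.
Proof.
have proj i := haarC_unitary_coef_rep HG HI (unitary_coef_rep_pi i).
rewrite Phi_expand (sum_triple (fun s U1 U2 =>
  \prod_i haarC I (fun x => pi_coef i x (pi_idx a s U1 i) (pi_idx b s U2 i)))).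
rewrite -(pair_bigA _ (fun s Df => conjc (gram_vec a (s, Df)) * gram_vec b (s, Df))).
apply: eq_bigr => s _.
transitivity (\sum_(Df : {ffun 'I_k -> pi_index}) \sum_(U1 : pair_index) \sum_(U2 : pair_index)
    conjc (\prod_i haarC I (fun x => pi_coef i x (Df i) (pi_idx a s U1 i))) *
    \prod_i haarC I (fun x => pi_coef i x (Df i) (pi_idx b s U2 i))); last first.
  by apply: eq_bigr => Df _; rewrite /gram_vec rmorph_sum big_distrlr.
rewrite [RHS]exchange_big; apply: eq_bigr => U1 _.
rewrite [RHS]exchange_big; apply: eq_bigr => U2 _.
exact: (prod_gram (P := fun i A B => haarC I (fun x => pi_coef i x A B)) proj).
Qed.

End PhiGram.

Theorem theorem1 (R : realType) (G : topologicalType)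
    (mul : G -> G -> G) (inv : G -> G) (e : G)
    (HG : is_compact_group mul inv e)
    (I : (G -> R) -> R) (HI : is_haar_integral mul I)
    (k : nat) (Hk : (2 <= k)%N)
    (ds da : 'I_k -> nat) (dr : 'I_k -> 'I_k -> nat)
    (sigma : forall i : 'I_k, G -> 'M[R[i]]_(ds i))
    (alpha : forall i : 'I_k, G -> 'M[R[i]]_(da i))
    (rho : forall i j : 'I_k, G -> 'M[R[i]]_(dr i j))
    (Hsigma : forall i, is_unitary_rep mul e (sigma i))
    (Halpha : forall i, is_unitary_rep mul e (alpha i))
    (Hrho : forall i j : 'I_k, (i < j)%N -> is_unitary_rep mul e (rho i j))
    (v : {dffun forall i : 'I_k, 'I_(ds i)} -> R[i]) :
  0 <= \sum_(a : {dffun forall i : 'I_k, 'I_(ds i)})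
         \sum_(b : {dffun forall i : 'I_k, 'I_(ds i)})
           (v a)^* * Phi mul inv e I sigma alpha rho a b * v b.
Proof.
pose M := (\max_i ds i + \max_i da i + \max_(ij : 'I_k * 'I_k) dr ij.1 ij.2)%N.
have hds i : (ds i <= M)%N.
  by rewrite (leq_trans (leq_bigmax i)) // /M -addnA leq_addr.
have hda i : (da i <= M)%N.
  by rewrite (leq_trans (leq_bigmax i)) // /M -addnA addnCA leq_addr.
have hdr i j : (dr i j <= M)%N.
  by rewrite (leq_trans (leq_bigmax (F := fun ij : 'I_k * 'I_k => dr ij.1 ij.2) (i, j))) // /M leq_addl.
under eq_bigr do under eq_bigr do rewrite (Phi_gram HG HI Hsigma Halpha Hrho hds hda hdr).
exact: gram_form_ge0.
Qed.
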